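(* Let $\theta>0$. Then there are $\psi,\psi_1,\psi_2\in\mathrm{H}^\infty_0(S_\theta)$ with \[\sum_{n\in\mathbb{Z}}\psi_1(z-n)\,\psi_2(z-n)\,\psi(z-n)=1\qquad(z\in S_\theta).\]
   Context: $S_\theta=\{z\in\mathbb{C}:|\operatorname{Im}z|<\theta\}$. $\mathrm{H}^\infty_0(S_\theta)$ is the set of holomorphic functions $f$ on $S_\theta$ such that for every $\alpha>0$ there is $C$ with $|f(z)|\le C(1+|\operatorname{Re}z|)^{-\alpha}$ for all $z\in S_\theta$. *)

From Stdlib Require Import Reals ZArith.
From Coquelicot Require Import Coquelicot.
Open Scope R_scope.

Definition strip (theta : R) (z : C) : Prop := Rabs (Im z) < theta.

Definition holomorphic_on (U : C -> Prop) (f : C -> C) : Prop :=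
  forall z, U z -> exists l : C,
    forall eps, 0 < eps -> exists delta, 0 < delta /\
      forall w, U w -> 0 < Cmod (Cminus w z) < delta ->
        Cmod (Cminus (Cdiv (Cminus (f w) (f z)) (Cminus w z)) l) < eps.

Definition Hinf0 (theta : R) (f : C -> C) : Prop :=
  holomorphic_on (strip theta) f /\
  forall alpha, 0 < alpha -> exists K : R,
    forall z, strip theta z -> Cmod (f z) <= K * Rpower (1 + Rabs (Re z)) (- alpha).

Definition sumZ (g : Z -> C) (s : C) : Prop :=
  ex_series (fun k : nat => Cmod (g (Z.of_nat k))) /\
  ex_series (fun k : nat => Cmod (g (- Z.of_nat (S k))%Z)) /\
  exists a b : C,
    is_series (fun k : nat => g (Z.of_nat k)) a /\
    is_series (fun k : nat => g (- Z.of_nat (S k))%Z) b /\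
    Cplus a b = s.

From Stdlib Require Import Reals ZArith Lra Psatz.
From Coquelicot Require Import Coquelicot.
Open Scope R_scope.

(* Put [s = e^(-3kz)] with [3k theta <= 1], so that [Re s > 0] on the strip, and
   [T = e^(3k)].  With [psi1 = e^(-kz) / (1 + s)], [psi2 = e^(-kz) / (1 + T s)] and
   [psi = (T - 1) (psi1 + psi2)] one gets [psi1 psi2 psi = 1/(1 + s)^2 - 1/(1 + T s)^2].
   Since [s(z - 1) = T s(z)], the sum over [n] telescopes, and the value is the limit of
   [1/(1 + s(z - n))^2] at [n = -oo] minus the one at [n = +oo], that is [1 - 0].
   Each [psi_i] is bounded by a multiple of [e^(-k |Re z|)], because [|1 + c s| >= 1] and
   [|1 + c s| >= |s|] when [c >= 1]; this beats every power of [1 + |Re z|]. *)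

Notation is_C_derive f z l := (@is_derive C_AbsRing (AbsRing_NormedModule C_AbsRing) f z l).

Definition C_derivable (f : C -> C) (z : C) : Prop := exists l : C, is_C_derive f z l.

Lemma is_C_derive_of_remainder (f : C -> C) (z l : C) :
  (forall eps, 0 < eps -> exists delta, 0 < delta /\ forall w, Cmod (w - z) < delta ->
     Cmod (f w - f z - l * (w - z)) <= eps * Cmod (w - z)) ->
  is_C_derive f z l.
Proof.
  intros H. split; [apply is_linear_scal_l|].
  intros x Hx. apply (@is_filter_lim_locally_unique C_AbsRing (AbsRing_NormedModule C_AbsRing)) in Hx.
  subst x. intros eps. destruct (H eps (cond_pos eps)) as [d [Hd Hw]].
  apply (@locally_norm_le_locally C_AbsRing (AbsRing_NormedModule C_AbsRing) z).
  exists (mkposreal d Hd). intros w Hb.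
  change (Cmod (f w - f z - (w - z) * l) <= eps * Cmod (w - z)).
  rewrite (Cmult_comm (w - z) l). apply Hw, Hb.
Qed.

Lemma holomorphic_on_of_C_derivable (U : C -> Prop) (f : C -> C) :
  (forall z, U z -> C_derivable f z) -> holomorphic_on U f.
Proof.
  intros Hf z Hz. destruct (Hf z Hz) as [l [_ Hl]]. exists l. intros eps Heps.
  assert (He2 : 0 < eps / 2) by lra.
  specialize (Hl z (fun P HP => HP) (mkposreal _ He2)).
  apply (@locally_le_locally_norm C_AbsRing (AbsRing_NormedModule C_AbsRing)) in Hl.
  destruct Hl as [d Hd]. exists d. split; [apply cond_pos|]. intros w _ [Hw0 Hwd].
  specialize (Hd w Hwd).
  change (Cmod (f w - f z - (w - z) * l) <= eps / 2 * Cmod (w - z)) in Hd.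
  assert (Hnz : (w - z)%C <> 0%C) by (intro E; rewrite E, Cmod_0 in Hw0; lra).
  replace ((f w - f z) / (w - z) - l)%C with ((f w - f z - (w - z) * l) / (w - z))%C
    by (field; exact Hnz).
  rewrite Cmod_div by exact Hnz. apply Rle_div_l in Hd; [|exact Hw0]. lra.
Qed.

Lemma C_derivable_const (c z : C) : C_derivable (fun _ => c) z.
Proof. eexists. exact (is_derive_const (V := AbsRing_NormedModule C_AbsRing) c z). Qed.

Lemma C_derivable_id (z : C) : C_derivable (fun w => w) z.
Proof. eexists. exact (is_derive_id (K := C_AbsRing) z). Qed.

Lemma C_derivable_plus (f g : C -> C) (z : C) :
  C_derivable f z -> C_derivable g z -> C_derivable (fun w => (f w + g w)%C) z.
Proof.
  intros [l1 H1] [l2 H2]. eexists.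
  exact (@is_derive_plus C_AbsRing (AbsRing_NormedModule C_AbsRing) f g z l1 l2 H1 H2).
Qed.

Lemma C_derivable_mult (f g : C -> C) (z : C) :
  C_derivable f z -> C_derivable g z -> C_derivable (fun w => (f w * g w)%C) z.
Proof. intros [l1 H1] [l2 H2]. eexists. exact (is_derive_mult f g z l1 l2 H1 H2 Cmult_comm). Qed.

Lemma C_derivable_comp (f g : C -> C) (z : C) :
  C_derivable g z -> C_derivable f (g z) -> C_derivable (fun w => f (g w)) z.
Proof.
  intros [l1 H1] [l2 H2]. eexists.
  exact (@is_derive_comp C_AbsRing (AbsRing_NormedModule C_AbsRing) f g z l2 l1 H2 H1).
Qed.

(* [/ w - / z + (w - z) / z^2 = (w - z)^2 / (w z^2)] and [|w| >= |z| / 2] near [z]. *)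
Lemma C_derivable_Cinv (z : C) : z <> 0%C -> C_derivable Cinv z.
Proof.
  intros Hz. exists (- / (z * z))%C. apply is_C_derive_of_remainder. intros eps Heps.
  assert (Ha : 0 < Cmod z) by (apply Cmod_gt_0; exact Hz).
  exists (Rmin (Cmod z / 2) (eps * (Cmod z * Cmod z * Cmod z) / 2)). split.
  { apply Rmin_pos; [lra|]. apply Rdiv_lt_0_compat; [|lra].
    apply Rmult_lt_0_compat; [lra|]. apply Rmult_lt_0_compat; [|lra]. nra. }
  intros w Hw.
  assert (H1 := Rmin_l (Cmod z / 2) (eps * (Cmod z * Cmod z * Cmod z) / 2)).
  assert (H2 := Rmin_r (Cmod z / 2) (eps * (Cmod z * Cmod z * Cmod z) / 2)).
  assert (Hwz : Cmod z <= Cmod w + Cmod (w - z)).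
  { replace z with (w + - (w - z))%C at 1 by ring.
    eapply Rle_trans; [apply Cmod_triangle|]. rewrite Cmod_opp. lra. }
  assert (Hw0 : w <> 0%C) by (intro E; subst w; rewrite Cmod_0 in Hwz; lra).
  replace (/ w - / z - - / (z * z) * (w - z))%C with ((w - z) * (w - z) / (w * (z * z)))%C
    by (field; split; assumption).
  rewrite Cmod_div by (repeat apply Cmult_neq_0; assumption). rewrite !Cmod_mult.
  set (a := Cmod z) in *. set (h := Cmod (w - z)) in *. set (b := Cmod w) in *.
  assert (Hh : 0 <= h) by apply Cmod_ge_0.
  assert (Hb : a / 2 <= b) by lra.
  apply Rle_div_l; [apply Rmult_lt_0_compat; nra|].
  assert (h * h <= h * (eps * (a * a * a) / 2)) by (apply Rmult_le_compat_l; lra).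
  assert (eps * h * (a / 2 * (a * a)) <= eps * h * (b * (a * a))).
  { apply Rmult_le_compat_l; [nra|]. apply Rmult_le_compat_r; nra. }
  nra.
Qed.

Lemma C_derivable_inv (g : C -> C) (z : C) :
  C_derivable g z -> g z <> 0%C -> C_derivable (fun w => / g w)%C z.
Proof. intros Hg Hz. exact (C_derivable_comp Cinv g z Hg (C_derivable_Cinv _ Hz)). Qed.

Definition cexp (z : C) : C := (exp (Re z) * cos (Im z), exp (Re z) * sin (Im z)).

Lemma cexp_add (a b : C) : cexp (a + b) = (cexp a * cexp b)%C.
Proof.
  destruct a as [a1 a2], b as [b1 b2]. unfold cexp, Cmult, Cplus, Re, Im; simpl.
  rewrite exp_plus, cos_plus, sin_plus. f_equal; ring.
Qed.

Lemma cexp_RtoC (r : R) : cexp (RtoC r) = RtoC (exp r).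
Proof. unfold cexp, RtoC; simpl. rewrite cos_0, sin_0. f_equal; ring. Qed.

Lemma Cmod_cexp (z : C) : Cmod (cexp z) = exp (Re z).
Proof.
  unfold cexp, Cmod; cbn [fst snd].
  replace ((exp (Re z) * cos (Im z)) ^ 2 + (exp (Re z) * sin (Im z)) ^ 2)
    with (exp (Re z) * exp (Re z) * ((sin (Im z))² + (cos (Im z))²)) by (unfold Rsqr; ring).
  rewrite sin2_cos2, Rmult_1_r. apply sqrt_square. left; apply exp_pos.
Qed.

Lemma exp_sub_1_sub_le (a : R) : Rabs a <= 1 / 2 -> 0 <= exp a - 1 - a <= 2 * a ^ 2.
Proof.
  intros Ha. apply Rabs_le_between in Ha.
  assert (H1 := exp_ineq1_le a). assert (H2 := exp_ineq1_le (- a)).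
  assert (H3 : exp a * exp (- a) = 1) by (rewrite <- exp_plus, Rplus_opp_r; apply exp_0).
  assert (H4 : exp a * (1 - a) <= 1).
  { rewrite <- H3. apply Rmult_le_compat_l; [left; apply exp_pos | lra]. }
  split; nra.
Qed.

Lemma sin_sub_id_le (b : R) : Rabs b <= 1 -> Rabs (sin b - b) <= b ^ 2.
Proof.
  assert (Hpos : forall c, 0 <= c <= 1 -> Rabs (sin c - c) <= c ^ 2).
  { intros c Hc. destruct (Req_dec c 0) as [->|Hc0].
    { rewrite sin_0, Rminus_0_r, Rabs_R0. lra. }
    assert (Hlt := sin_lt_x c ltac:(lra)).
    destruct (SIN c ltac:(lra) ltac:(generalize PI2_1; lra)) as [Hlb _].
    replace (sin_lb c) with (c - c^3/6 + c^5/120 - c^7/5040) in Hlb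
      by (unfold sin_lb, sin_approx, sin_term; simpl; field).
    rewrite Rabs_left1 by lra.
    assert (H5 : 0 <= c^5) by (apply pow_le; lra).
    assert (c^3 <= c^2) by (simpl; nra).
    assert (c^7 <= c^5).
    { replace (c^7) with (c^5 * c^2) by ring. rewrite <- (Rmult_1_r (c^5)) at 2.
      apply Rmult_le_compat_l; [lra | simpl; nra]. }
    lra. }
  intros Hb. destruct (Rle_dec 0 b).
  - apply Hpos. apply Rabs_le_between in Hb; lra.
  - replace (sin b - b) with (- (sin (- b) - (- b))) by (rewrite sin_neg; ring).
    rewrite Rabs_Ropp. replace (b ^ 2) with ((- b) ^ 2) by ring.
    apply Hpos. apply Rabs_le_between in Hb; lra.
Qed.

Lemma cos_sub_1_le (b : R) : Rabs b <= 1 -> Rabs (cos b - 1) <= b ^ 2.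
Proof.
  intros Hb. apply Rabs_le_between in Hb.
  destruct (COS b ltac:(generalize PI2_1; lra) ltac:(generalize PI2_1; lra)) as [Hlb _].
  replace (cos_lb b) with (1 - b^2/2 + b^4/24 - b^6/720) in Hlb
    by (unfold cos_lb, cos_approx, cos_term; simpl; field).
  assert (Hub := COS_bound b). rewrite Rabs_left1 by lra.
  assert (b^2 <= 1) by (simpl; nra). assert (0 <= b^4) by (simpl; nra).
  assert (b^6 <= b^4) by (simpl; nra). nra.
Qed.

Lemma Cmod_le_Rabs_Re_Im (z : C) : Cmod z <= Rabs (Re z) + Rabs (Im z).
Proof.
  destruct z as [x y]. unfold Re, Im; cbn [fst snd].
  replace (x, y) with (RtoC x + Ci * RtoC y)%C at 1
    by (unfold RtoC, Ci, Cmult, Cplus; simpl; f_equal; ring).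
  eapply Rle_trans; [apply Cmod_triangle|].
  rewrite Cmod_mult, Cmod_Ci, !Cmod_R. lra.
Qed.

(* Real and imaginary parts: [(e^a - 1 - a) + e^a (cos b - 1)] and [(e^a - 1) sin b + (sin b - b)]. *)
Lemma cexp_sub_1_sub_le (h : C) : Cmod h <= 1 / 2 -> Cmod (cexp h - 1 - h) <= 8 * Cmod h ^ 2.
Proof.
  intros Hh. destruct h as [a b].
  assert (Hm := Cmod2_alt (a, b)). assert (Hm0 := Cmod_ge_0 (a, b)).
  unfold Re, Im in Hm; cbn [fst snd] in Hm.
  set (m := Cmod (a, b)) in *.
  assert (Ha : Rabs a <= m)
    by (rewrite <- (Rabs_right m) by lra; apply Rsqr_le_abs_0; unfold Rsqr; nra).
  assert (Hb : Rabs b <= m)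
    by (rewrite <- (Rabs_right m) by lra; apply Rsqr_le_abs_0; unfold Rsqr; nra).
  eapply Rle_trans; [apply Cmod_le_Rabs_Re_Im|].
  unfold cexp, Re, Im, Cminus, Cplus, Copp, RtoC; cbn [fst snd].
  replace (exp a * cos b + - (1) + - a) with ((exp a - 1 - a) + exp a * (cos b - 1)) by ring.
  replace (exp a * sin b + - (0) + - b) with ((exp a - 1) * sin b + (sin b - b)) by ring.
  destruct (exp_sub_1_sub_le a ltac:(lra)) as [E1 E2].
  assert (C1 := cos_sub_1_le b ltac:(lra)). assert (S1 := sin_sub_id_le b ltac:(lra)).
  assert (Hexp1 : Rabs (exp a - 1) <= 2 * Rabs a).
  { apply Rabs_le_between in Ha. apply Rabs_le_between.
    destruct (Rle_dec 0 a); [rewrite Rabs_right by lra | rewrite Rabs_left by lra]; split; nra. }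
  assert (Hsin : Rabs (sin b) <= 2 * Rabs b).
  { replace (sin b) with ((sin b - b) + b) by ring. eapply Rle_trans; [apply Rabs_triang|].
    rewrite <- (pow2_abs b) in S1. assert (0 <= Rabs b) by apply Rabs_pos. nra. }
  assert (Hexp : exp a <= 2) by (apply Rabs_le_between in Ha; nra).
  assert (0 <= Rabs a) by apply Rabs_pos. assert (0 <= Rabs b) by apply Rabs_pos.
  assert (Rabs (exp a - 1 - a + exp a * (cos b - 1)) <= 2 * a ^ 2 + 2 * b ^ 2).
  { eapply Rle_trans; [apply Rabs_triang|]. rewrite Rabs_mult, (Rabs_right (exp a)) by (left; apply exp_pos).
    rewrite Rabs_right by lra. generalize (Rabs_pos (cos b - 1)) (exp_pos a). nra. }
  assert (Rabs ((exp a - 1) * sin b + (sin b - b)) <= 4 * Rabs a * Rabs b + b ^ 2).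
  { eapply Rle_trans; [apply Rabs_triang|]. rewrite Rabs_mult.
    generalize (Rabs_pos (exp a - 1)) (Rabs_pos (sin b)). nra. }
  assert (Rabs a * Rabs b <= m ^ 2) by (simpl; rewrite Rmult_1_r; apply Rmult_le_compat; lra).
  generalize (pow2_ge_0 a) (pow2_ge_0 b). lra.
Qed.

(* [e^w - e^z - e^z (w - z) = e^z (e^(w - z) - 1 - (w - z))] *)
Lemma C_derivable_cexp (z : C) : C_derivable cexp z.
Proof.
  exists (cexp z). apply is_C_derive_of_remainder. intros eps Heps.
  assert (HK : 0 < Cmod (cexp z)) by (rewrite Cmod_cexp; apply exp_pos).
  set (K := Cmod (cexp z)) in *.
  exists (Rmin (1 / 2) (eps / (8 * K))). split.
  { apply Rmin_pos; [lra|]. apply Rdiv_lt_0_compat; lra. }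
  intros w Hw.
  assert (H1 := Rmin_l (1 / 2) (eps / (8 * K))). assert (H2 := Rmin_r (1 / 2) (eps / (8 * K))).
  replace (cexp w - cexp z - cexp z * (w - z))%C with (cexp z * (cexp (w - z) - 1 - (w - z)))%C.
  2: { assert (Ew : cexp w = (cexp z * cexp (w - z))%C) by (rewrite <- cexp_add; f_equal; ring).
       rewrite Ew. ring. }
  rewrite Cmod_mult. fold K.
  assert (Hn := cexp_sub_1_sub_le (w - z) ltac:(lra)).
  set (h := Cmod (w - z)) in *. assert (0 <= h) by apply Cmod_ge_0.
  assert (h * (8 * K) <= eps).
  { replace eps with (eps / (8 * K) * (8 * K)) by (field; lra).
    apply Rmult_le_compat_r; lra. }
  apply Rle_trans with (K * (8 * h ^ 2)); [apply Rmult_le_compat_l; lra|]. nra.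
Qed.

Lemma exp_le_exp_of_le (x y : R) : x <= y -> exp x <= exp y.
Proof. intros [Hlt | ->]; [left; apply exp_increasing, Hlt | right; reflexivity]. Qed.

Lemma ln_le_sub_1 (y : R) : 0 < y -> ln y <= y - 1.
Proof.
  intros Hy. rewrite <- (ln_exp (y - 1)). apply ln_le; [exact Hy|].
  generalize (exp_ineq1_le (y - 1)). lra.
Qed.

(* With [m = alpha / k], apply [ln y <= y - 1] to [y = (1 + x) / m]. *)
Lemma exp_neg_le_Rpower (k alpha : R) : 0 < k -> 0 < alpha ->
  exists K : R, forall x, 0 <= x -> exp (- k * x) <= K * Rpower (1 + x) (- alpha).
Proof.
  intros Hk Halpha. set (m := alpha / k).
  assert (Hm : 0 < m) by (unfold m; apply Rdiv_lt_0_compat; lra).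
  exists (exp (k + alpha * (ln m - 1))). intros x Hx.
  unfold Rpower. rewrite <- exp_plus. apply exp_le_exp_of_le.
  assert (Hl : ln ((1 + x) / m) <= (1 + x) / m - 1)
    by (apply ln_le_sub_1, Rdiv_lt_0_compat; lra).
  rewrite ln_div in Hl by lra.
  assert (Hkm : alpha * ((1 + x) / m) = k * (1 + x)) by (unfold m; field; lra).
  assert (H : alpha * ln (1 + x) - alpha * ln m <= k * (1 + x) - alpha).
  { rewrite <- Hkm. apply Rmult_le_compat_l with (r := alpha) in Hl; [|lra]. lra. }
  replace (k + alpha * (ln m - 1) + - alpha * ln (1 + x))
    with (k * (1 + x) - alpha - (alpha * ln (1 + x) - alpha * ln m) - k * x) by ring.
  lra.
Qed.

Definition exp_decaying (theta k : R) (f : C -> C) : Prop :=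
  exists A : R, forall z, strip theta z -> Cmod (f z) <= A * exp (- k * Rabs (Re z)).

Lemma exp_decaying_plus (theta k : R) (f g : C -> C) :
  exp_decaying theta k f -> exp_decaying theta k g ->
  exp_decaying theta k (fun z => (f z + g z)%C).
Proof.
  intros [A HA] [B HB]. exists (A + B). intros z Hz.
  eapply Rle_trans; [apply Cmod_triangle|]. generalize (HA z Hz) (HB z Hz). lra.
Qed.

Lemma exp_decaying_scal (theta k : R) (c : C) (f : C -> C) :
  exp_decaying theta k f -> exp_decaying theta k (fun z => (c * f z)%C).
Proof.
  intros [A HA]. exists (Cmod c * A). intros z Hz. rewrite Cmod_mult, Rmult_assoc.
  apply Rmult_le_compat_l; [apply Cmod_ge_0 | apply HA, Hz].
Qed.

Lemma Hinf0_of_exp_decaying (theta k : R) (f : C -> C) : 0 < k ->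
  (forall z, strip theta z -> C_derivable f z) -> exp_decaying theta k f -> Hinf0 theta f.
Proof.
  intros Hk Hf [A HA]. split; [exact (holomorphic_on_of_C_derivable _ _ Hf)|].
  intros alpha Halpha. destruct (exp_neg_le_Rpower k alpha Hk Halpha) as [K HK].
  exists (A * K). intros z Hz. eapply Rle_trans; [apply HA, Hz|].
  rewrite Rmult_assoc. apply Rmult_le_compat_l; [|apply HK, Rabs_pos].
  generalize (HA z Hz) (Cmod_ge_0 (f z)) (exp_pos (- k * Rabs (Re z))). nra.
Qed.

Lemma ex_series_Cmod_telescope (c : nat -> C) (M q : R) : 0 <= q < 1 ->
  (forall n, Cmod (c n) <= M * q ^ n) -> ex_series (fun n => Cmod (c n - c (S n))).
Proof.
  intros Hq Hc.
  apply (ex_series_le (K := R_AbsRing) (V := R_CompleteNormedModule) _ (fun n => 2 * M * q ^ n)).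
  - intros n. change (Rabs (Cmod (c n - c (S n))) <= 2 * M * q ^ n).
    rewrite Rabs_right by (apply Rle_ge, Cmod_ge_0).
    unfold Cminus. eapply Rle_trans; [apply Cmod_triangle|]. rewrite Cmod_opp.
    assert (H1 := Hc n). assert (H2 := Hc (S n)). simpl in H2.
    assert (0 <= q ^ n) by (apply pow_le; lra).
    assert (0 <= M) by (generalize (Hc O) (Cmod_ge_0 (c O)); simpl; lra).
    assert (M * (q * q ^ n) <= M * q ^ n) by (apply Rmult_le_compat_l; nra). lra.
  - apply (ex_series_scal_l (K := R_AbsRing) (V := R_NormedModule) (2 * M) (fun n => q ^ n)).
    apply ex_series_geom. rewrite Rabs_right; lra.
Qed.

Lemma is_series_telescope (c : nat -> C) (M q : R) : 0 <= q < 1 ->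
  (forall n, Cmod (c n) <= M * q ^ n) -> is_series (fun n => (c n - c (S n))%C) (c O).
Proof.
  intros Hq Hc.
  assert (HM : 0 <= M) by (generalize (Hc O) (Cmod_ge_0 (c O)); simpl; lra).
  assert (Hsum : forall N, sum_n (fun n => (c n - c (S n))%C) N = (c O - c (S N))%C).
  { induction N as [|N IH]; [rewrite sum_O; reflexivity|].
    rewrite sum_Sn, IH. change ((c O - c (S N)) + (c (S N) - c (S (S N))) = c O - c (S (S N)))%C.
    ring. }
  apply (filterlim_locally_ball_norm (K := C_AbsRing)). intros eps.
  destruct (pow_lt_1_zero q ltac:(rewrite Rabs_right; lra) (eps / (M + 1)))
    as [N HN]; [apply Rdiv_lt_0_compat; [apply cond_pos | lra]|].
  exists N. intros n Hn. unfold ball_norm. rewrite Hsum.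
  change (Cmod (c O - c (S n) - c O) < eps).
  replace (c O - c (S n) - c O)%C with (- c (S n))%C by ring. rewrite Cmod_opp.
  specialize (HN (S n) ltac:(lia)). rewrite Rabs_right in HN by (apply Rle_ge, pow_le; lra).
  apply Rmult_lt_compat_l with (r := M + 1) in HN; [|lra].
  replace ((M + 1) * (eps / (M + 1))) with (pos eps) in HN by (field; lra).
  eapply Rle_lt_trans; [apply Hc|].
  assert (0 <= q ^ S n) by (apply pow_le; lra). nra.
Qed.

(* The two halves telescope to [G 0 - 0] and [L - G 0]. *)
Lemma sumZ_telescope (g G : Z -> C) (L : C) (M1 M2 q : R) : 0 <= q < 1 ->
  (forall n, g n = (G n - G (n + 1)%Z)%C) ->
  (forall n : nat, Cmod (G (Z.of_nat n)) <= M1 * q ^ n) ->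
  (forall n : nat, Cmod (G (- Z.of_nat n)%Z - L) <= M2 * q ^ n) ->
  sumZ g L.
Proof.
  intros Hq Hg Hpos Hneg.
  set (a := fun n : nat => G (Z.of_nat n)).
  set (c := fun n : nat => (L - G (- Z.of_nat n)%Z)%C).
  assert (Ea : forall n, g (Z.of_nat n) = (a n - a (S n))%C).
  { intros n. rewrite Hg. unfold a. rewrite Nat2Z.inj_succ. reflexivity. }
  assert (Ec : forall n, g (- Z.of_nat (S n))%Z = (c n - c (S n))%C).
  { intros n. rewrite Hg. unfold c.
    replace (- Z.of_nat (S n) + 1)%Z with (- Z.of_nat n)%Z by lia. ring. }
  assert (Hc : forall n, Cmod (c n) <= M2 * q ^ n).
  { intros n. unfold c. rewrite <- Cmod_opp, Copp_minus_distr. apply Hneg. }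
  split; [|split].
  - apply (ex_series_ext (fun n => Cmod (a n - a (S n)))); [intros n; rewrite Ea; reflexivity|].
    exact (ex_series_Cmod_telescope a M1 q Hq Hpos).
  - apply (ex_series_ext (fun n => Cmod (c n - c (S n)))); [intros n; rewrite Ec; reflexivity|].
    exact (ex_series_Cmod_telescope c M2 q Hq Hc).
  - exists (a O), (c O). split; [|split].
    + apply (is_series_ext (fun n => (a n - a (S n))%C)); [intros n; rewrite Ea; reflexivity|].
      exact (is_series_telescope a M1 q Hq Hpos).
    + apply (is_series_ext (fun n => (c n - c (S n))%C)); [intros n; rewrite Ec; reflexivity|].
      exact (is_series_telescope c M2 q Hq Hc).
    + unfold a, c. simpl. ring.
Qed.

Definition inv_sqr_1p (s : C) : C := (/ ((1 + s) * (1 + s)))%C.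

Lemma Cmod_1p_ge_1 (s : C) : 0 <= Re s -> 1 <= Cmod (1 + s).
Proof.
  intros Hs. assert (H := Cmod2_alt (1 + s)). rewrite re_plus, im_plus, re_RtoC, im_RtoC in H.
  generalize (Cmod_ge_0 (1 + s)) (pow2_ge_0 (Im s)). nra.
Qed.

Lemma Cmod_le_Cmod_1p (s : C) : 0 <= Re s -> Cmod s <= Cmod (1 + s).
Proof.
  intros Hs. assert (H := Cmod2_alt (1 + s)). rewrite re_plus, im_plus, re_RtoC, im_RtoC in H.
  assert (H' := Cmod2_alt s). generalize (Cmod_ge_0 (1 + s)) (Cmod_ge_0 s). nra.
Qed.

Lemma one_plus_neq_0 (s : C) : 0 <= Re s -> (1 + s)%C <> 0%C.
Proof. intros Hs E. assert (H := Cmod_1p_ge_1 s Hs). rewrite E, Cmod_0 in H. lra. Qed.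

Lemma Cmod_inv_sqr_1p (s : C) : 0 <= Re s -> Cmod (inv_sqr_1p s) = / (Cmod (1 + s) ^ 2).
Proof.
  intros Hs. unfold inv_sqr_1p. assert (H := one_plus_neq_0 s Hs).
  rewrite Cmod_inv, Cmod_mult by (apply Cmult_neq_0; exact H). f_equal. ring.
Qed.

Lemma Cmod_inv_sqr_1p_le (s : C) : 0 <= Re s -> 0 < Cmod s ->
  Cmod (inv_sqr_1p s) <= / Cmod s ^ 2.
Proof.
  intros Hs Hs0. rewrite Cmod_inv_sqr_1p by exact Hs.
  apply Rinv_le_contravar; [apply pow_lt, Hs0|]. apply pow_incr. split; [lra|].
  apply Cmod_le_Cmod_1p, Hs.
Qed.

Lemma Cmod_inv_sqr_1p_sub_1_le (s : C) : 0 <= Re s ->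
  Cmod (inv_sqr_1p s - 1) <= Cmod s * (2 + Cmod s).
Proof.
  intros Hs. assert (Hn := one_plus_neq_0 s Hs).
  replace (inv_sqr_1p s - 1)%C with (- (s * (2 + s)) * inv_sqr_1p s)%C
    by (unfold inv_sqr_1p; field; exact Hn).
  rewrite Cmod_mult, Cmod_opp, Cmod_mult.
  assert (H2s : Cmod (2 + s) <= 2 + Cmod s).
  { eapply Rle_trans; [apply Cmod_triangle|]. rewrite Cmod_R, Rabs_right; lra. }
  assert (HF : Cmod (inv_sqr_1p s) <= 1).
  { rewrite Cmod_inv_sqr_1p by exact Hs. assert (H1 := Cmod_1p_ge_1 s Hs).
    apply Rle_trans with (/ 1); [apply Rinv_le_contravar; [lra | simpl; nra] | rewrite Rinv_1; lra]. }
  generalize (Cmod_ge_0 s) (Cmod_ge_0 (2 + s)) (Cmod_ge_0 (inv_sqr_1p s)). intros.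
  apply Rle_trans with (Cmod s * Cmod (2 + s) * 1); [apply Rmult_le_compat_l; nra|].
  rewrite Rmult_1_r. apply Rmult_le_compat_l; lra.
Qed.

Definition expk (a : R) (z : C) : C := cexp (RtoC (- a) * z).

Lemma Cmod_expk (a : R) (z : C) : Cmod (expk a z) = exp (- a * Re z).
Proof. unfold expk. rewrite Cmod_cexp, re_scal_l. reflexivity. Qed.

Lemma expk_sub_RtoC (a : R) (z : C) (x : R) :
  expk a (z - RtoC x) = (RtoC (exp (a * x)) * expk a z)%C.
Proof.
  unfold expk. rewrite <- cexp_RtoC, <- cexp_add. f_equal.
  rewrite RtoC_mult, RtoC_opp. ring.
Qed.

Lemma expk_cube (a : R) (z : C) : (expk a z * expk a z * expk a z)%C = expk (3 * a) z.
Proof.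
  unfold expk. rewrite <- !cexp_add. f_equal.
  replace (RtoC (- (3 * a))) with (RtoC (- a) + RtoC (- a) + RtoC (- a))%C
    by (rewrite <- !RtoC_plus; f_equal; ring).
  ring.
Qed.

Lemma C_derivable_expk (a : R) (z : C) : C_derivable (expk a) z.
Proof.
  apply (C_derivable_comp cexp (fun w => RtoC (- a) * w)%C).
  - apply C_derivable_mult; [apply C_derivable_const | apply C_derivable_id].
  - apply C_derivable_cexp.
Qed.

Lemma strip_sub_RtoC (theta : R) (z : C) (x : R) : strip theta z -> strip theta (z - RtoC x).
Proof.
  unfold strip. replace (Im (z - RtoC x)) with (Im z) by (destruct z; simpl; ring). tauto.
Qed.

Lemma Re_expk_pos (a theta : R) (z : C) : 0 <= a -> a * theta <= 1 -> strip theta z ->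
  0 < Re (expk a z).
Proof.
  intros Ha Hat Hz. unfold expk, cexp at 1. cbn [fst Re].
  apply Rmult_lt_0_compat; [apply exp_pos|].
  rewrite im_scal_l. unfold strip in Hz. apply Rabs_def2 in Hz.
  assert (HPI := PI2_1). apply cos_gt_0; nra.
Qed.

Lemma exp_div_le_exp_abs (k x D : R) : 0 <= k -> 1 <= D -> exp (- (3 * k) * x) <= D ->
  exp (- k * x) / D <= exp (- k * Rabs x).
Proof.
  intros Hk HD1 HD. apply Rle_div_l; [lra|]. destruct (Rle_dec 0 x).
  - rewrite Rabs_right by lra. generalize (exp_pos (- k * x)). nra.
  - rewrite Rabs_left by lra.
    apply Rle_trans with (exp (- k * - x) * exp (- (3 * k) * x)).
    + rewrite <- exp_plus. apply exp_le_exp_of_le. nra.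
    + apply Rmult_le_compat_l; [left; apply exp_pos | exact HD].
Qed.

Lemma exp_mult_INR (a : R) (n : nat) : exp (a * INR n) = exp a ^ n.
Proof.
  induction n as [|n IH]; [rewrite Rmult_0_r; apply exp_0|].
  rewrite S_INR, Rmult_plus_distr_l, Rmult_1_r, exp_plus, IH. simpl. ring.
Qed.

Section Bumps.

Variables (theta k : R).
Hypotheses (Hk : 0 < k) (Hk_theta : 3 * k * theta <= 1).

Definition bump (c : R) (z : C) : C := (expk k z / (1 + RtoC c * expk (3 * k) z))%C.

Lemma Re_scal_expk_nonneg (c : R) (z : C) : 0 <= c -> strip theta z ->
  0 <= Re (RtoC c * expk (3 * k) z).
Proof.
  intros Hc Hz. rewrite re_scal_l. apply Rmult_le_pos; [exact Hc|].
  left. apply (Re_expk_pos _ theta); [lra | lra | exact Hz].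
Qed.

Lemma C_derivable_bump (c : R) (z : C) : 0 <= c -> strip theta z -> C_derivable (bump c) z.
Proof.
  intros Hc Hz. unfold bump, Cdiv.
  apply C_derivable_mult; [apply C_derivable_expk|].
  apply C_derivable_inv; [|apply one_plus_neq_0, Re_scal_expk_nonneg; assumption].
  apply C_derivable_plus; [apply C_derivable_const|].
  apply C_derivable_mult; [apply C_derivable_const | apply C_derivable_expk].
Qed.

(* [|1 + c e^(-3kz)|] is at least [1] and at least [e^(-3k Re z)]. *)
Lemma bump_exp_decaying (c : R) : 1 <= c -> exp_decaying theta k (bump c).
Proof.
  intros Hc. exists 1. intros z Hz. rewrite Rmult_1_l.
  assert (Hre := Re_scal_expk_nonneg c z ltac:(lra) Hz).
  unfold bump. rewrite Cmod_div by (apply one_plus_neq_0, Hre). rewrite Cmod_expk.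
  apply exp_div_le_exp_abs; [lra | apply Cmod_1p_ge_1, Hre|].
  eapply Rle_trans; [|apply Cmod_le_Cmod_1p, Hre].
  rewrite Cmod_mult, Cmod_R, Cmod_expk, Rabs_right by lra.
  rewrite <- (Rmult_1_l (exp _)) at 1. apply Rmult_le_compat_r; [left; apply exp_pos | exact Hc].
Qed.

(* Both sides equal [(T - 1) s (2 + (T + 1) s) / ((1 + s)^2 (1 + T s)^2)] with
   [s = e^(-3kw) = (e^(-kw))^3], using [2 + (T + 1) s = (1 + s) + (1 + T s)]. *)
Lemma bump_product (T : R) (w : C) : 0 < T -> 0 <= Re (expk (3 * k) w) ->
  (bump 1 w * bump T w * (RtoC (T - 1) * (bump 1 w + bump T w)))%C
  = (inv_sqr_1p (expk (3 * k) w) - inv_sqr_1p (RtoC T * expk (3 * k) w))%C.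
Proof.
  intros HT Hw.
  assert (H1 := one_plus_neq_0 _ Hw).
  assert (HT' : 0 <= Re (RtoC T * expk (3 * k) w)) by (rewrite re_scal_l; nra).
  assert (H2 := one_plus_neq_0 _ HT').
  unfold bump, inv_sqr_1p. rewrite RtoC_minus. rewrite <- (expk_cube k w) in *.
  field. split; assumption.
Qed.

Lemma exp_3k_gt_1 : 1 < exp (3 * k).
Proof. generalize (exp_ineq1 (3 * k) ltac:(lra)). lra. Qed.

Lemma Cmod_inv_sqr_1p_expk_shift_le (z : C) (n : nat) : strip theta z ->
  Cmod (inv_sqr_1p (expk (3 * k) (z - RtoC (IZR (Z.of_nat n)))))
  <= / Cmod (expk (3 * k) z) ^ 2 * (/ exp (3 * k)) ^ n.
Proof.
  intros Hz. rewrite <- INR_IZR_INZ, expk_sub_RtoC, exp_mult_INR.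
  assert (HTn : 1 <= exp (3 * k) ^ n) by (apply pow_R1_Rle; generalize exp_3k_gt_1; lra).
  assert (Hr : 0 < Cmod (expk (3 * k) z)) by (rewrite Cmod_expk; apply exp_pos).
  assert (Hs : Cmod (RtoC (exp (3 * k) ^ n) * expk (3 * k) z)
               = exp (3 * k) ^ n * Cmod (expk (3 * k) z))
    by (rewrite Cmod_mult, Cmod_R, Rabs_right by lra; reflexivity).
  eapply Rle_trans.
  { apply Cmod_inv_sqr_1p_le; [apply Re_scal_expk_nonneg; [lra | exact Hz]|].
    rewrite Hs. nra. }
  rewrite Hs, pow_inv, <- Rinv_mult.
  set (T := exp (3 * k) ^ n) in *. set (r := Cmod (expk (3 * k) z)) in *.
  apply Rinv_le_contravar; [nra|]. simpl. nra.
Qed.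

Lemma Cmod_inv_sqr_1p_expk_shift_sub_1_le (z : C) (n : nat) : strip theta z ->
  Cmod (inv_sqr_1p (expk (3 * k) (z - RtoC (IZR (- Z.of_nat n)))) - 1)
  <= Cmod (expk (3 * k) z) * (2 + Cmod (expk (3 * k) z)) * (/ exp (3 * k)) ^ n.
Proof.
  intros Hz. rewrite opp_IZR, <- INR_IZR_INZ, expk_sub_RtoC.
  replace (3 * k * - INR n) with (- (3 * k) * INR n) by ring.
  rewrite exp_mult_INR, exp_Ropp.
  assert (HT := exp_3k_gt_1).
  assert (Hq : 0 <= (/ exp (3 * k)) ^ n <= 1).
  { split; [apply pow_le; left; apply Rinv_0_lt_compat; lra|].
    rewrite <- (pow1 n). apply pow_incr. split; [left; apply Rinv_0_lt_compat; lra|].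
    rewrite <- Rinv_1. apply Rinv_le_contravar; lra. }
  eapply Rle_trans; [apply Cmod_inv_sqr_1p_sub_1_le, Re_scal_expk_nonneg; [lra | exact Hz]|].
  rewrite Cmod_mult, Cmod_R, Rabs_right by lra.
  assert (Hr := Cmod_ge_0 (expk (3 * k) z)).
  set (q := (/ exp (3 * k)) ^ n) in *. set (r := Cmod (expk (3 * k) z)) in *.
  replace (r * (2 + r) * q) with (q * r * (2 + r)) by ring.
  apply Rmult_le_compat_l; nra.
Qed.

Lemma sumZ_bump_product (z : C) : strip theta z ->
  sumZ (fun n : Z =>
          let w := Cminus z (RtoC (IZR n)) in
          Cmult (Cmult (bump 1 w) (bump (exp (3 * k)) w))
                (RtoC (exp (3 * k) - 1) * (bump 1 w + bump (exp (3 * k)) w))%C)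
       (RtoC 1).
Proof.
  intros Hz. assert (HT := exp_3k_gt_1).
  assert (Hq : 0 <= / exp (3 * k) < 1).
  { split; [left; apply Rinv_0_lt_compat; lra|]. rewrite <- Rinv_1. apply Rinv_lt_contravar; lra. }
  set (r := Cmod (expk (3 * k) z)).
  apply (sumZ_telescope _ (fun n => inv_sqr_1p (expk (3 * k) (z - RtoC (IZR n))))
           _ (/ r ^ 2) (r * (2 + r)) _ Hq).
  - intros n. cbv zeta.
    rewrite bump_product
      by (lra || (left; apply (Re_expk_pos _ theta); [lra | lra | apply strip_sub_RtoC, Hz])).
    rewrite plus_IZR, RtoC_plus.
    replace (z - (RtoC (IZR n) + RtoC 1))%C with (z - RtoC (IZR n) - RtoC 1)%C by ring.
    rewrite (expk_sub_RtoC _ (z - RtoC (IZR n))), Rmult_1_r. reflexivity.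
  - intros n. apply Cmod_inv_sqr_1p_expk_shift_le, Hz.
  - intros n. apply Cmod_inv_sqr_1p_expk_shift_sub_1_le, Hz.
Qed.

End Bumps.

Theorem lemma8p6 (theta : R) (Htheta : 0 < theta) :
  exists psi psi1 psi2 : C -> C,
    Hinf0 theta psi /\ Hinf0 theta psi1 /\ Hinf0 theta psi2 /\
    forall z : C, strip theta z ->
      sumZ (fun n : Z =>
              let w := Cminus z (RtoC (IZR n)) in
              Cmult (Cmult (psi1 w) (psi2 w)) (psi w))
           (RtoC 1).
Proof.
  set (k := / (3 * theta)).
  assert (Hk : 0 < k) by (unfold k; apply Rinv_0_lt_compat; lra).
  assert (Hk_theta : 3 * k * theta <= 1) by (unfold k; right; field; lra).
  set (T := exp (3 * k)).
  assert (HT : 1 < T) by exact (exp_3k_gt_1 k Hk).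
  exists (fun z => RtoC (T - 1) * (bump k 1 z + bump k T z))%C, (bump k 1), (bump k T).
  split; [|split; [|split]].
  - apply (Hinf0_of_exp_decaying theta k _ Hk).
    + intros z Hz. apply C_derivable_mult; [apply C_derivable_const|].
      apply C_derivable_plus; apply (C_derivable_bump theta); lra || assumption.
    + apply exp_decaying_scal, exp_decaying_plus; apply bump_exp_decaying; lra.
  - apply (Hinf0_of_exp_decaying theta k _ Hk); [|apply bump_exp_decaying; lra].
    intros z Hz. apply (C_derivable_bump theta); lra || assumption.
  - apply (Hinf0_of_exp_decaying theta k _ Hk); [|apply bump_exp_decaying; lra].
    intros z Hz. apply (C_derivable_bump theta); lra || assumption.
  - intros z Hz. exact (sumZ_bump_product theta k Hk Hk_theta z Hz).
Qed.
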